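(* $GR(4,K_4,3) = 10$.
   Context: For positive integers $r,s,t$, $GR(r,K_s,t)$ denotes the minimum integer $n$ such that every coloring of the edges of $K_n$ with $r$ colors contains a copy of $K_s$ whose edges use at most $t$ distinct colors. *)

From mathcomp Require Import all_boot.
Set Implicit Arguments. Unset Strict Implicit. Unset Printing Implicit Defensive.

(* An r-edge-colouring of K_n: vertices 'I_n, the edge {i,j} with i < j gets
   colour c (i, j) : 'I_r (values of c at pairs with ~(i<j) are irrelevant). *)
Definition edge_colouring (n r : nat) := ('I_n -> 'I_n -> 'I_r).

Definition colours_on (n r : nat) (c : edge_colouring n r) (S : {set 'I_n})
  : {set 'I_r} :=
  [set c i j | i in S, j in S & (i < j)%N].

Definition GR_property (r s t n : nat) : Prop :=
  forall c : edge_colouring n r,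
    exists S : {set 'I_n}, #|S| = s /\ #|colours_on c S| <= t.

Definition GR_is (r s t m : nat) : Prop :=
  GR_property r s t m /\ forall n, n < m -> ~ GR_property r s t n.

From mathcomp Require Import all_boot zify.
Set Implicit Arguments. Unset Strict Implicit. Unset Printing Implicit Defensive.

(* Upper bound: if every K_4 in a 4-colouring of K_10 saw all four colours,
   every colour class would be a graph without a stable set of size 4.
   Removing a maximal stable set I (|I| <= 3) from such a graph destroys at
   least one edge per remaining vertex, so it has at least 3 + 4 + 5 = 12
   edges on 10 vertices; four colour classes would then need 48 > 45 edges.
   Lower bound: colour K_9, viewed as the affine plane over F_3, by the
   parallel class of the line through each pair of points; by pigeonhole any
   four points contain, for every class, two points on a common line of it,
   so every K_4 sees all four colours. *)

Section StableSets.
Variables (T : finType) (e : rel T).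
Implicit Types A B I S : {set T}.

Definition stable (A : {set T}) := [forall x in A, forall y in A, ~~ e x y].

(* Ordered pairs, so twice the number of edges inside [A]. *)
Definition arcs (A : {set T}) := \sum_(x in A) \sum_(y in A) e x y.

Lemma stableS A B : A \subset B -> stable B -> stable A.
Proof.
move=> /subsetP AB /forall_inP stB; apply/forall_inP => x xA.
by apply/forall_inP => y yA; move/forall_inP: (stB x (AB x xA)); apply; apply: AB.
Qed.

Hypotheses (e_sym : symmetric e) (e_irr : irreflexive e).

Lemma arcs_split_maximal_stable S : exists2 I : {set T}, I \subset S /\ stable I &
  2 * #|S :\: I| + arcs (S :\: I) <= arcs S.
Proof.
pose P I := (I \subset S) && stable I.
have P0 : P set0 by rewrite /P sub0set; apply/forall_inP => x; rewrite inE.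
have [I /andP[IS stI] Imax] := arg_maxnP (fun I => #|I|) P0.
exists I => //; set D := S :\: I.
have neighbour x : x \in D -> exists2 y, y \in I & e x y.
  rewrite inE => /andP[xI xS]; apply/exists_inP; apply: contraT => /exists_inPn nbr.
  have : P (x |: I).
    rewrite /P subUset sub1set xS IS /=; apply/forall_inP => y; rewrite in_setU1.
    case/predU1P => [-> | yI]; apply/forall_inP => z; rewrite in_setU1.
    - by case/predU1P => [-> | /nbr]; rewrite ?e_irr.
    - case/predU1P => [-> | zI]; first by rewrite e_sym nbr.
      by move/forall_inP: stI => /(_ y yI) /forall_inP; apply.
  by move/Imax; rewrite cardsU1 xI; lia.
have splitS F : \sum_(y in S) F y = \sum_(y in I) F y + \sum_(y in D) F y.
  by rewrite (big_setID I) (setIidPr IS).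
have arcsE : arcs S = arcs D + 2 * \sum_(x in D) \sum_(y in I) e x y.
  rewrite /arcs; under eq_bigr do rewrite splitS.
  rewrite big_split /= !splitS.
  have -> : \sum_(x in I) \sum_(y in I) e x y = 0.
    apply: big1 => x xI; apply: big1 => y yI.
    by move/forall_inP: stI => /(_ x xI) /forall_inP /(_ y yI) /negbTE ->.
  have -> : \sum_(x in I) \sum_(y in D) e x y = \sum_(x in D) \sum_(y in I) e x y.
    by rewrite exchange_big; apply: eq_bigr => x _; apply: eq_bigr => y _; rewrite e_sym.
  lia.
have : #|D| <= \sum_(x in D) \sum_(y in I) e x y.
  rewrite -sum1_card; apply: leq_sum => x /neighbour [y yI exy].
  by rewrite (bigD1 y) //= exy.
rewrite arcsE; lia.
Qed.

Lemma arcs_lower_bound_step a :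
  (forall A, stable A -> #|A| <= a) ->
  forall m b, (forall A, m <= #|A| -> b <= arcs A) ->
  forall S, m + a <= #|S| -> 2 * m + b <= arcs S.
Proof.
move=> stable_le m b IH S cS.
have [I [IS stI] le] := arcs_split_maximal_stable S.
have mD : m <= #|S :\: I| by rewrite cardsD (setIidPr IS); have := stable_le _ stI; lia.
have := IH _ mD; lia.
Qed.

Lemma arcs_ge24_of_stable_le3 :
  (forall A, stable A -> #|A| <= 3) -> forall S, 10 <= #|S| -> 24 <= arcs S.
Proof.
move/arcs_lower_bound_step => step.
by apply: (step 7 10); apply: (step 4 2); apply: (step 1 0).
Qed.

End StableSets.

Lemma exists_subset_card (T : finType) (A : {set T}) k :
  k <= #|A| -> exists2 B : {set T}, B \subset A & #|B| = k.
Proof.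
move/card_geqP => [s [us <- sA]]; exists [set x in s].
  by apply/subsetP => x; rewrite inE => /sA.
by rewrite cardsE (card_uniqP us).
Qed.

Section ColourClasses.
Variables (n r : nat) (c : edge_colouring n r).

Definition edge_colour (i j : 'I_n) : 'I_r := if i < j then c i j else c j i.

Definition colour_class (k : 'I_r) : rel 'I_n :=
  fun i j => (i != j) && (edge_colour i j == k).

Lemma edge_colourC i j : edge_colour i j = edge_colour j i.
Proof. by rewrite /edge_colour; case: ltngtP => // /val_inj->. Qed.

Lemma colour_class_sym k : symmetric (colour_class k).
Proof. by move=> i j; rewrite /colour_class eq_sym edge_colourC. Qed.

Lemma colour_class_irr k : irreflexive (colour_class k).
Proof. by move=> i; rewrite /colour_class eqxx. Qed.

Lemma stable_colour_classE k A :
  stable (colour_class k) A = (k \notin colours_on c A).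
Proof.
apply/forall_inP/idP => [stA | kA i iA].
  apply/imset2P => -[i j iA]; rewrite inE => /andP[jA ij] kc.
  have /negP := forall_inP (stA i iA) j jA; apply.
  rewrite /colour_class /edge_colour ij kc eqxx andbT.
  by apply: contraTneq ij => ->; rewrite ltnn.
apply/forall_inP => j jA; apply: contra kA => /andP[ij /eqP <-].
rewrite /edge_colour; case: ltngtP => [lt | gt | eq_ij].
- by apply/imset2P; exists i j; rewrite // inE jA.
- by apply/imset2P; exists j i; rewrite // inE iA.
by rewrite (val_inj eq_ij) eqxx in ij.
Qed.

Lemma sum_arcs_colour_class :
  \sum_(k < r) arcs (colour_class k) [set: 'I_n] = n * n.-1.
Proof.
rewrite exchange_big /=; under eq_bigr do rewrite exchange_big /=.
transitivity (\sum_(i < n) \sum_(j < n) (i != j)).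
  apply: eq_big => [i | i _]; first by rewrite inE.
  apply: eq_big => [j | j _]; first by rewrite inE.
  rewrite (bigD1 (edge_colour i j)) //= big1 => [|k /negbTE]; rewrite /colour_class.
    by rewrite eqxx andbT addn0.
  by rewrite eq_sym => ->; rewrite andbF.
rewrite -[n in n * _]card_ord -sum_nat_const; apply: eq_bigr => i _.
rewrite -[n in n.-1](card_ord n) -(cardC1 i) -sum1_card [RHS]big_mkcond.
by apply: eq_bigr => j _; rewrite !inE eq_sym; case: eqP.
Qed.

Lemma colour_class_stable_lt s k :
  (forall S : {set 'I_n}, #|S| = s -> r.-1 < #|colours_on c S|) ->
  forall A, stable (colour_class k) A -> #|A| < s.
Proof.
move=> rainbow A stA; rewrite ltnNge; apply/negP => /exists_subset_card [B BA cB].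
have kB : k \notin colours_on c B by rewrite -stable_colour_classE (stableS BA).
have := rainbow B cB; apply/negP; rewrite -leqNgt -[r in r.-1]card_ord -(cardsC1 k).
by apply/subset_leq_card/subsetP => k' k'B; rewrite in_setC1; apply: contraNneq kB => <-.
Qed.

End ColourClasses.

Lemma GR_property_4_4_3_10 : GR_property 4 4 3 10.
Proof.
move=> c; have [/existsP [S /andP[/eqP cS cc]] | /existsPn rainbow] :=
  boolP [exists S : {set 'I_10}, (#|S| == 4) && (#|colours_on c S| <= 3)].
  by exists S.
exfalso; have stable_le3 k A : stable (colour_class c k) A -> #|A| <= 3.
  apply: (colour_class_stable_lt (s := 4)) => S cS.
  by move: (rainbow S); rewrite cS eqxx ltnNge.
have : \sum_(k < 4) 24 <= \sum_(k < 4) arcs (colour_class c k) [set: 'I_10].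
  apply: leq_sum => k _; apply: arcs_ge24_of_stable_le3 (stable_le3 k) _ _.
  - exact: colour_class_sym.
  - exact: colour_class_irr.
  - by rewrite cardsT card_ord.
by rewrite sum_arcs_colour_class sum_nat_const card_ord; lia.
Qed.

Lemma GR_property_widen r s t n m :
  n <= m -> GR_property r s t n -> GR_property r s t m.
Proof.
move=> le_nm GRn c; pose w := widen_ord le_nm.
have w_inj : injective w by move=> i j /(congr1 val) eq_ij; apply: val_inj.
have [S [cS cc]] := GRn (fun i j => c (w i) (w j)).
exists (w @: S); split; first by rewrite card_imset.
apply: leq_trans cc; apply/subset_leq_card/subsetP => k /imset2P [_ j' /imsetP [i iS ->]].
rewrite inE => /andP [/imsetP [j jS ->] ij] ->.
by apply/imset2P; exists i j; rewrite // inE jS.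
Qed.

Lemma exists_collision (T : finType) m (f : T -> 'I_m) (A : {set T}) :
  m < #|A| -> exists x y, [/\ x \in A, y \in A, x != y & f x = f y].
Proof.
move=> lt_mA; have : ~~ dinjectiveb f A.
  apply: contraTN lt_mA => /dinjectiveP inj; rewrite -leqNgt -[m]card_ord.
  exact: leq_card_in inj.
case/dinjectivePn => x xA [y /andP [yx yA] fxy].
by exists x, y; rewrite eq_sym.
Qed.

(* The point [v] of ['I_9] is [(v %/ 3, v %% 3)] in the affine plane over F_3;
   [affine_line k v] indexes the line through [v] in the [k]-th of its four
   parallel classes. *)
Definition affine_line (k v : nat) : nat :=
  let x := v %/ 3 in let y := v %% 3 in
  (match k with 0 => x | 1 => y | 2 => x + y | _ => x + 2 * y end) %% 3.

Lemma affine_line_unique (u v : 'I_9) (k k' : 'I_4) : u != v ->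
  affine_line k u = affine_line k v -> affine_line k' u = affine_line k' v -> k = k'.
Proof.
have: all (fun u => all (fun v => all (fun k => all (fun k' => [==> u != v,
  affine_line k u == affine_line k v, affine_line k' u == affine_line k' v => k == k'])
  (iota 0 4)) (iota 0 4)) (iota 0 9)) (iota 0 9) by vm_compute.
have mem n (i : 'I_n) : val i \in iota 0 n by rewrite mem_iota add0n ltn_ord.
move=> /allP/(_ u (mem _ _))/allP/(_ v (mem _ _))/allP/(_ k (mem _ _))/allP/(_ k' (mem _ _)).
move=> /implyP H /H/implyP H1 /eqP/H1/implyP H2 /eqP/H2/eqP; exact: val_inj.
Qed.

Definition affine_colouring : edge_colouring 9 4 :=
  fun u v => odflt ord0 [pick k : 'I_4 | affine_line k u == affine_line k v].

Lemma affine_colouringE (u v : 'I_9) (k : 'I_4) : u != v ->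
  affine_line k u = affine_line k v -> affine_colouring u v = k.
Proof.
move=> uv ek; rewrite /affine_colouring; case: pickP => [k' /eqP ek' | none] /=.
  exact: affine_line_unique uv ek' ek.
by move: (none k); rewrite ek eqxx.
Qed.

Lemma colours_on_affine_colouring (S : {set 'I_9}) :
  #|S| = 4 -> colours_on affine_colouring S = [set: 'I_4].
Proof.
move=> cS; apply/setP => k; rewrite inE.
pose f (v : 'I_9) : 'I_3 := inord (affine_line k v).
have /(exists_collision f) [u [v [uS vS uv /(congr1 val)]]] : 3 < #|S| by rewrite cS.
rewrite /f /= !inordK ?ltn_pmod // => ek.
have [lt | gt | eq_uv] := ltngtP u v; last by rewrite (val_inj eq_uv) eqxx in uv.
  by apply/imset2P; exists u v; rewrite ?inE ?vS ?lt ?(affine_colouringE uv ek).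
apply/imset2P; exists v u; rewrite ?inE ?uS ?gt // (affine_colouringE _ (esym ek)) //.
by rewrite eq_sym.
Qed.

Lemma not_GR_property_4_4_3_9 : ~ GR_property 4 4 3 9.
Proof.
move=> /(_ affine_colouring) [S [cS]].
by rewrite colours_on_affine_colouring // cardsT card_ord.
Qed.

Theorem mainTheorem10 : GR_is 4 4 3 10.
Proof.
split; first exact: GR_property_4_4_3_10.
move=> n lt_n10 GRn; apply: not_GR_property_4_4_3_9.
exact: (GR_property_widen (m := 9) lt_n10 GRn).
Qed.
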